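(* Let $p$ be a prime number and $(t,R_1,R_2)\in\mathcal{F}$. The map $F_{t,R_1,R_2}=(J,H):\mathrm{S}^2_p\times\mathrm{S}^2_p\to\mathbb{Q}_p^2$, $J=R_1z_1+R_2z_2$, $H=(1-t)z_1+t(x_1x_2+y_1y_2+z_1z_2)$, has exactly four rank $0$ critical points, namely $P=(0,0,1,0,0,1)$, $Q=(0,0,-1,0,0,1)$, $S=(0,0,1,0,0,-1)$, $T=(0,0,-1,0,0,-1)$.
   Context: $\mathrm{S}^2_p=\{(x,y,z)\in\mathbb{Q}_p^3:x^2+y^2+z^2=1\}$ is the $p$-adic sphere (a $p$-adic analytic manifold of dimension $2$), and $(x_1,y_1,z_1,x_2,y_2,z_2)$ are the coordinates on $\mathrm{S}^2_p\times\mathrm{S}^2_p$. $\mathcal{F}=\{(t,R_1,R_2)\in\mathbb{Z}_p\times\mathbb{Q}_p^2:|R_2|_p>|R_1|_p>0\}$. A rank $0$ critical point is a point $m$ with $dJ_m=dH_m=0$. *)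

From mathcomp Require Import all_boot all_order all_algebra.
From mathcomp Require Import mpoly.
Set Implicit Arguments. Unset Strict Implicit. Unset Printing Implicit Defensive.
Import Order.TTheory GRing.Theory Num.Theory.
Local Open Scope ring_scope.

Definition padic_abs_rat (p : nat) (q : rat) : rat :=
  if q == 0 then 0
  else (p%:R ^+ logn p `|denq q|%N) / (p%:R ^+ logn p `|numq q|%N).

(* A model of the field Q_p of p-adic numbers: a field K with a
   non-archimedean absolute value (valued in Q, as p-adic values lie in p^Z),
   restricting to the p-adic absolute value on the canonical copy of Q,
   complete, and in which Q is dense.  Such a K is the completion of
   (Q, |.|_p), hence isometrically isomorphic to Q_p. *)
Record padic_field (p : nat) := PadicField {
  pf_car :> fieldType;
  pf_abs : pf_car -> rat;
  pf_abs_eq0 : forall x, (pf_abs x = 0) <-> (x = 0);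
  pf_abs_ge0 : forall x, 0 <= pf_abs x;
  pf_absM : forall x y, pf_abs (x * y) = pf_abs x * pf_abs y;
  pf_abs_ultra : forall x y, pf_abs (x + y) <= Num.max (pf_abs x) (pf_abs y);
  pf_abs_rat : forall q : rat, pf_abs (ratr q) = padic_abs_rat p q;
  pf_complete : forall u : nat -> pf_car,
    (forall eps : rat, 0 < eps -> exists N, forall m n, (N <= m)%N -> (N <= n)%N ->
        pf_abs (u m - u n) < eps) ->
    exists l, forall eps : rat, 0 < eps -> exists N, forall n, (N <= n)%N ->
        pf_abs (u n - l) < eps;
  pf_dense : forall (x : pf_car) (eps : rat), 0 < eps ->
    exists q : rat, pf_abs (x - ratr q) < eps
}.

Section Maps.
Variable K : fieldType.

Definition vx1 : 'I_6 := inord 0.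
Definition vy1 : 'I_6 := inord 1.
Definition vz1 : 'I_6 := inord 2.
Definition vx2 : 'I_6 := inord 3.
Definition vy2 : 'I_6 := inord 4.
Definition vz2 : 'I_6 := inord 5.

Definition pt6 (x1 y1 z1 x2 y2 z2 : K) : 'I_6 -> K :=
  fun i => nth 0 [:: x1; y1; z1; x2; y2; z2] i.

Definition sph1 : {mpoly K[6]} := 'X_vx1 ^+ 2 + 'X_vy1 ^+ 2 + 'X_vz1 ^+ 2 - 1.
Definition sph2 : {mpoly K[6]} := 'X_vx2 ^+ 2 + 'X_vy2 ^+ 2 + 'X_vz2 ^+ 2 - 1.

Definition on_SxS (m : 'I_6 -> K) : Prop := sph1.@[m] = 0 /\ sph2.@[m] = 0.

Definition Jpoly (R1 R2 : K) : {mpoly K[6]} := R1 *: 'X_vz1 + R2 *: 'X_vz2.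
Definition Hpoly (t : K) : {mpoly K[6]} :=
  (1 - t) *: 'X_vz1 + t *: ('X_vx1 * 'X_vx2 + 'X_vy1 * 'X_vy2 + 'X_vz1 * 'X_vz2).

Definition diff (f : {mpoly K[6]}) (m v : 'I_6 -> K) : K :=
  \sum_(i < 6) (mderiv i f).@[m] * v i.

(* tangent space of S^2 x S^2 (regular level set of (sph1, sph2)) at m *)
Definition tangent (m v : 'I_6 -> K) : Prop :=
  diff sph1 m v = 0 /\ diff sph2 m v = 0.

Definition rank0_critical (J H : {mpoly K[6]}) (m : 'I_6 -> K) : Prop :=
  on_SxS m /\ forall v, tangent m v -> diff J m v = 0 /\ diff H m v = 0.
End Maps.

(* A tangent vector to S^2 x S^2 can move z1 alone against x1 (namely
   (z1, 0, -x1, 0, 0, 0)), and similarly for y1, x2, y2; on it dJ takes the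
   value -R1 x1 (resp. -R1 y1, -R2 x2, -R2 y2).  As R1, R2 are nonzero, dJ = 0
   forces the point onto the poles (0, 0, ±1) of both spheres.  Conversely at
   the poles the tangent space is {dz1 = dz2 = 0}, on which dJ and dH both
   vanish.  The p-adic hypotheses only enter through R1, R2 <> 0 and 2 <> 0. *)

From mathcomp Require Import all_boot all_order all_algebra.
From mathcomp Require Import mpoly.
From mathcomp Require Import ring.
Import Order.TTheory GRing.Theory Num.Theory.
Local Open Scope ring_scope.

Section Differential.
Variable K : fieldType.
Implicit Types (f g : {mpoly K[6]}) (m v : 'I_6 -> K).

Lemma meval_mderivXU m i j : (mderiv i ('X_j : {mpoly K[6]})).@[m] = (j == i)%:R.
Proof.
rewrite mderivX mevalZ mnm1E; case: eqP => [->|_]; last by rewrite mul0r.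
have -> : (U_(i) - U_(i))%MM = 0%MM by apply/mnmP => k; rewrite mnmBE mnm0E subnn.
by rewrite mpolyX0 meval1 mulr1.
Qed.

Lemma diffD f g m v : diff (f + g) m v = diff f m v + diff g m v.
Proof. by rewrite /diff -big_split; apply: eq_bigr => i _; rewrite mderivD mevalD mulrDl. Qed.

Lemma diffB f g m v : diff (f - g) m v = diff f m v - diff g m v.
Proof. by rewrite /diff -sumrB; apply: eq_bigr => i _; rewrite mderivB mevalB mulrBl. Qed.

Lemma diffZ c f m v : diff (c *: f) m v = c * diff f m v.
Proof. by rewrite /diff mulr_sumr; apply: eq_bigr => i _; rewrite mderivZ mevalZ mulrA. Qed.

Lemma diffM f g m v : diff (f * g) m v = f.@[m] * diff g m v + g.@[m] * diff f m v.
Proof.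
rewrite /diff !mulr_sumr -big_split; apply: eq_bigr => i _.
by rewrite mderivM mevalD !mevalM /=; ring.
Qed.

Lemma diffXU i m v : diff 'X_i m v = v i.
Proof.
rewrite /diff (bigD1 i) //= meval_mderivXU eqxx mul1r big1 ?addr0 // => j /negPf.
by rewrite meval_mderivXU eq_sym => ->; rewrite mul0r.
Qed.

Lemma diff1 m v : diff 1 m v = 0.
Proof. by rewrite /diff big1 // => i _; rewrite -mpolyC1 mderivC meval0 mul0r. Qed.

Lemma diff_sqr f m v : diff (f ^+ 2) m v = 2 * f.@[m] * diff f m v.
Proof. by rewrite expr2 diffM; ring. Qed.

End Differential.

Section CriticalPoints.
Context {K : fieldType}.
Implicit Types (m v : 'I_6 -> K).

Lemma pt6_vx1 (a b c d e f : K) : pt6 a b c d e f vx1 = a. Proof. by rewrite /pt6 /vx1 inordK. Qed.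
Lemma pt6_vy1 (a b c d e f : K) : pt6 a b c d e f vy1 = b. Proof. by rewrite /pt6 /vy1 inordK. Qed.
Lemma pt6_vz1 (a b c d e f : K) : pt6 a b c d e f vz1 = c. Proof. by rewrite /pt6 /vz1 inordK. Qed.
Lemma pt6_vx2 (a b c d e f : K) : pt6 a b c d e f vx2 = d. Proof. by rewrite /pt6 /vx2 inordK. Qed.
Lemma pt6_vy2 (a b c d e f : K) : pt6 a b c d e f vy2 = e. Proof. by rewrite /pt6 /vy2 inordK. Qed.
Lemma pt6_vz2 (a b c d e f : K) : pt6 a b c d e f vz2 = f. Proof. by rewrite /pt6 /vz2 inordK. Qed.

Definition pt6E := (pt6_vx1, pt6_vy1, pt6_vz1, pt6_vx2, pt6_vy2, pt6_vz2).

Lemma meval_sph1 m : (sph1 K).@[m] = m vx1 ^+ 2 + m vy1 ^+ 2 + m vz1 ^+ 2 - 1.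
Proof. by rewrite /sph1 !expr2 mevalB !mevalD !mevalM !mevalXU meval1. Qed.

Lemma meval_sph2 m : (sph2 K).@[m] = m vx2 ^+ 2 + m vy2 ^+ 2 + m vz2 ^+ 2 - 1.
Proof. by rewrite /sph2 !expr2 mevalB !mevalD !mevalM !mevalXU meval1. Qed.

Lemma diff_sph1 m v :
  diff (sph1 K) m v = 2 * (m vx1 * v vx1 + m vy1 * v vy1 + m vz1 * v vz1).
Proof. by rewrite /sph1 diffB diff1 !diffD !diff_sqr !diffXU !mevalXU; ring. Qed.

Lemma diff_sph2 m v :
  diff (sph2 K) m v = 2 * (m vx2 * v vx2 + m vy2 * v vy2 + m vz2 * v vz2).
Proof. by rewrite /sph2 diffB diff1 !diffD !diff_sqr !diffXU !mevalXU; ring. Qed.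

Lemma diff_Jpoly R1 R2 m v : diff (Jpoly R1 R2) m v = R1 * v vz1 + R2 * v vz2.
Proof. by rewrite /Jpoly diffD !diffZ !diffXU. Qed.

Lemma diff_Hpoly t m v :
  diff (Hpoly t) m v = (1 - t) * v vz1 + t * (m vx1 * v vx2 + m vx2 * v vx1
    + m vy1 * v vy2 + m vy2 * v vy1 + m vz1 * v vz2 + m vz2 * v vz1).
Proof. by rewrite /Hpoly diffD !diffZ !diffD !diffM !diffXU !mevalXU; ring. Qed.

Lemma tangent_pt6 {m} {a b c d e f : K} :
  m vx1 * a + m vy1 * b + m vz1 * c = 0 -> m vx2 * d + m vy2 * e + m vz2 * f = 0 ->
  tangent m (pt6 a b c d e f).
Proof. by rewrite /tangent diff_sph1 diff_sph2 !pt6E => -> ->; rewrite mulr0. Qed.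

Variables (t R1 R2 : K).
Hypotheses (two_neq0 : (2 : K) != 0) (R1_neq0 : R1 != 0) (R2_neq0 : R2 != 0).

Definition on_zaxes m := [/\ m vx1 = 0, m vy1 = 0, m vx2 = 0 & m vy2 = 0].

Lemma on_zaxes_of_dJ0 {m} :
  (forall v, tangent m v -> diff (Jpoly R1 R2) m v = 0) -> on_zaxes m.
Proof.
move=> dJ0.
have dot0 (x y z : K) : x * 0 + y * 0 + z * 0 = 0 by rewrite !mulr0 !addr0.
have dz1_eq0 a b c : m vx1 * a + m vy1 * b + m vz1 * c = 0 -> c = 0.
  move=> h; have /eqP := dJ0 _ (tangent_pt6 h (dot0 _ _ _)).
  by rewrite diff_Jpoly !pt6E mulr0 addr0 mulf_eq0 (negPf R1_neq0) => /eqP.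
have dz2_eq0 d e f : m vx2 * d + m vy2 * e + m vz2 * f = 0 -> f = 0.
  move=> h; have /eqP := dJ0 _ (tangent_pt6 (dot0 _ _ _) h).
  by rewrite diff_Jpoly !pt6E mulr0 add0r mulf_eq0 (negPf R2_neq0) => /eqP.
split; apply/eqP; rewrite -oppr_eq0; apply/eqP.
- by apply: (dz1_eq0 (m vz1) 0); ring.
- by apply: (dz1_eq0 0 (m vz1)); ring.
- by apply: (dz2_eq0 (m vz2) 0); ring.
- by apply: (dz2_eq0 0 (m vz2)); ring.
Qed.

Lemma on_SxS_zaxesE {m} : on_zaxes m ->
  on_SxS m <-> m vz1 ^+ 2 = 1 /\ m vz2 ^+ 2 = 1.
Proof.
case=> x1 y1 x2 y2; rewrite /on_SxS meval_sph1 meval_sph2 x1 y1 x2 y2 expr0n /= !add0r.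
split=> [[/eqP + /eqP] | [-> ->]]; last by rewrite subrr.
by rewrite !subr_eq0 => /eqP-> /eqP->.
Qed.

Lemma tangent_at_poles {m v} : on_zaxes m -> on_SxS m -> tangent m v ->
  v vz1 = 0 /\ v vz2 = 0.
Proof.
move=> zm /(on_SxS_zaxesE zm) [z1_sqr z2_sqr]; case: zm => x1 y1 x2 y2.
have z_neq0 (z : K) : z ^+ 2 = 1 -> z != 0.
  by move=> z2; apply/eqP => z0; move: z2; rewrite z0 expr2 mulr0 => /eqP; rewrite eq_sym oner_eq0.
rewrite /tangent diff_sph1 diff_sph2 x1 y1 x2 y2 !mul0r !add0r => -[/eqP + /eqP].
rewrite !mulf_eq0 (negPf two_neq0) (negPf (z_neq0 _ z1_sqr)).
by rewrite (negPf (z_neq0 _ z2_sqr)) => /eqP-> /eqP->.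
Qed.

Lemma rank0_critical_at_poles {m} : on_zaxes m -> on_SxS m ->
  rank0_critical (Jpoly R1 R2) (Hpoly t) m.
Proof.
move=> zm Sm; split=> // v /(tangent_at_poles zm Sm) [v1 v2].
case: zm => [x1 y1 x2 y2].
by rewrite diff_Jpoly diff_Hpoly v1 v2 x1 y1 x2 y2; split; ring.
Qed.

Lemma rank0_criticalE x1 y1 z1 x2 y2 z2 :
  rank0_critical (Jpoly R1 R2) (Hpoly t) (pt6 x1 y1 z1 x2 y2 z2) <->
  [\/ (x1, y1, z1, x2, y2, z2) = (0, 0, 1, 0, 0, 1),
      (x1, y1, z1, x2, y2, z2) = (0, 0, -1, 0, 0, 1),
      (x1, y1, z1, x2, y2, z2) = (0, 0, 1, 0, 0, -1) |
      (x1, y1, z1, x2, y2, z2) = (0, 0, -1, 0, 0, -1)].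
Proof.
split.
- move=> [S dJH0]; have zm := on_zaxes_of_dJ0 (fun v Tv => (dJH0 v Tv).1).
  have := (on_SxS_zaxesE zm).1 S; move: zm.
  rewrite /on_zaxes !pt6E => -[-> -> -> ->] [/eqP + /eqP]; rewrite !sqrf_eq1.
  by move=> /orP[]/eqP-> /orP[]/eqP->; [apply: Or41 | apply: Or43 | apply: Or42 | apply: Or44].
- move=> poles.
  have zm : on_zaxes (pt6 x1 y1 z1 x2 y2 z2).
    by rewrite /on_zaxes !pt6E; case: poles => -[-> -> _ -> -> _].
  apply: (rank0_critical_at_poles zm); apply/(on_SxS_zaxesE zm); rewrite !pt6E.
  by case: poles => -[_ _ -> _ _ ->]; rewrite ?sqrrN expr1n.
Qed.

End CriticalPoints.

Lemma padic_abs_rat_eq0 p q : (padic_abs_rat p q == 0) = (q == 0).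
Proof.
rewrite /padic_abs_rat; case: ifP => // _.
rewrite mulf_eq0 invr_eq0 !expf_eq0 !pnatr_eq0 !logn_gt0 !mem_primes.
by have [-> | _] := eqVneq p 0%N; rewrite ?andbF.
Qed.

Section PadicField.
Context {p : nat} {Qp : padic_field p}.

Lemma pf_abs0 : pf_abs (0 : Qp) = 0.
Proof. exact/pf_abs_eq0. Qed.

Lemma pf_abs_gt0 {x : Qp} : 0 < pf_abs x -> x != 0.
Proof. by apply: contraTneq => ->; rewrite pf_abs0 ltxx. Qed.

Lemma pf_natr_eq0 n : ((n%:R : Qp) == 0) = (n == 0%N).
Proof.
rewrite -[n%:R]ratr_nat -(pnatr_eq0 rat) -(padic_abs_rat_eq0 p) -(pf_abs_rat Qp).
by apply/eqP/eqP => [-> | /pf_abs_eq0 //]; exact: pf_abs0.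
Qed.

End PadicField.

Theorem proposition2p4 (p : nat) (Qp : padic_field p) (t R1 R2 : Qp) :
  prime p ->
  pf_abs t <= 1 ->
  0 < pf_abs R1 -> pf_abs R1 < pf_abs R2 ->
  forall x1 y1 z1 x2 y2 z2 : Qp,
    rank0_critical (Jpoly R1 R2) (Hpoly t) (pt6 x1 y1 z1 x2 y2 z2) <->
    [\/ (x1, y1, z1, x2, y2, z2) = (0, 0, 1, 0, 0, 1),
        (x1, y1, z1, x2, y2, z2) = (0, 0, -1, 0, 0, 1),
        (x1, y1, z1, x2, y2, z2) = (0, 0, 1, 0, 0, -1) |
        (x1, y1, z1, x2, y2, z2) = (0, 0, -1, 0, 0, -1)].
Proof.
move=> _ _ R1_gt0 R1_lt_R2.
have two_neq0 : (2 : Qp) != 0 by rewrite pf_natr_eq0.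
have R1_neq0 : R1 != 0 := pf_abs_gt0 R1_gt0.
have R2_neq0 : R2 != 0 := pf_abs_gt0 (lt_trans R1_gt0 R1_lt_R2).
exact: (@rank0_criticalE Qp t R1 R2 two_neq0 R1_neq0 R2_neq0).
Qed.
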